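(* Let $\mathbf H\subset GL_m(\mathbb C)$ be a finite unitary group and $\mathbf G=\mathbf H\wr\mathrm{Sym}_n$ acting on $\mathbb C^{mn}$, with the subgroup sequence, coset leaders and initial vector described in the context. Then the subgroup decoding algorithm decodes robustly.
   Context: $\mathbf G$ is the group of $mn\times mn$ block permutation matrices with nonzero $m\times m$ blocks in $\mathbf H$; elements written $\sigma(h_1,\dots,h_n)$. Subgroups: $\mathbf G_0=\{I\}$, $\mathbf G_{2l-1}=(\mathbf H\wr\mathrm{Sym}_l)\oplus\{I_{m(n-l)}\}$ ($1\le l\le n$), $\mathbf G_{2l}=(\mathbf H\wr\mathrm{Sym}_l)\oplus\mathbf H\oplus\{I_{m(n-l-1)}\}$ ($1\le l\le n-1$), so $\mathbf G_{2n-1}=\mathbf G$. Coset leaders: $\operatorname{CL}(\mathbf G_1/\mathbf G_0)=\mathbf G_1$; $\operatorname{CL}(\mathbf G_{2l}/\mathbf G_{2l-1})=\{(1,\dots,1,h,1,\dots,1):h\in\mathbf H\text{ in slot }l+1\}$; $\operatorname{CL}(\mathbf G_{2l+1}/\mathbf G_{2l})=\{(j\ j{+}1\ \cdots\ l{+}1):1\le j\le l+1\}$ (block permutation cycles). Initial vector $\mathbf x_0=(u_1\mathbf v_0,\dots,u_n\mathbf v_0)$, where $\mathbf v_0\in\mathbb C^m$ is a unit vector such that the identity is the unique $h\in\mathbf H$ minimizing $\|h\mathbf v_0-\mathbf v_0\|$, and $0<u_1<\cdots<u_n$ are reals with $\|\mathbf x_0\|=1$. $S=\operatorname{Stab}_{\mathbf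 G}(\mathbf x_0)$. Subgroup decoding algorithm: $\mathbf r_0=\mathbf r$; for $k=1,\dots,2n-1$ choose $d_k\in\operatorname{CL}(\mathbf G_k/\mathbf G_{k-1})$ minimizing $\|a\mathbf r_{k-1}-\mathbf x_0\|$ (ties broken by a fixed ordering), $\mathbf r_k=d_k\mathbf r_{k-1}$; output $d_{2n-1}\cdots d_1$. It decodes robustly if for all $g\in\mathbf G$ and $\mathbf r$ with $\|\mathbf r-g^{-1}\mathbf x_0\|<\|\mathbf r-h^{-1}\mathbf x_0\|$ for all $h\notin Sg$, the output lies in $Sg$. *)

From mathcomp Require Import all_boot all_algebra all_fingroup.
From mathcomp Require Import reals complex.
From mathcomp Require Import zify.
Set Implicit Arguments. Unset Strict Implicit. Unset Printing Implicit Defensive.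
Import GRing.Theory Num.Theory.
Local Open Scope ring_scope.

(* The block cycle (j j+1 ... l) on 0-based block indices: j -> j+1 -> ... -> l -> j.
   (In the paper's 1-based notation this is (j+1 j+2 ... l+1).) *)
Definition cyc_nat (j l i : nat) : nat :=
  if (j <= i)%N && (i < l)%N then i.+1 else if i == l then j else i.

Lemma cyc_nat_inj (j l : nat) : (j <= l)%N -> injective (cyc_nat j l).
Proof.
move=> jl i1 i2; rewrite /cyc_nat.
by repeat (case: ifP => ?); lia.
Qed.

Definition cycf (n j l : nat) (i : 'I_n) : 'I_n :=
  if (j <= l)%N && (l < n)%N then insubd i (cyc_nat j l i) else i.

Lemma cycf_inj (n j l : nat) : injective (@cycf n j l).
Proof.
move=> i1 i2; rewrite /cycf; case: ifP => // /andP[jl ln] e.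
have lt : forall i : 'I_n, (cyc_nat j l i < n)%N.
  by move=> i; rewrite /cyc_nat; have := ltn_ord i; repeat (case: ifP => ?); lia.
apply: val_inj; apply: (cyc_nat_inj jl).
by move/(congr1 val): e; rewrite !val_insubd !lt.
Qed.

Section Wreath.
Variables (R : realType) (m n : nat).
Local Notation C := R[i].

(* Vectors of C^{mn}, written blockwise as (x_1, ..., x_n) with x_i in C^m. *)
Definition vec := 'I_n -> 'cV[C]_m.

(* Element sigma(h_1,...,h_n) of the block permutation group; it acts by the
   block permutation matrix with block (i, sigma^-1 i) equal to h_i, i.e.
   (g x)_i = h_i x_{sigma^-1 i}: block i of x is moved to position sigma i. *)
Definition elt := ({perm 'I_n} * {ffun 'I_n -> 'M[C]_m})%type.

Definition act (g : elt) (x : vec) : vec := fun i => g.2 i *m x (g.1^-1%g i).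

Definition eone : elt := (1%g, [ffun => 1%:M]).
(* product corresponding to the matrix product: act (emul g1 g2) = act g1 \o act g2 *)
Definition emul (g1 g2 : elt) : elt :=
  ((g2.1 * g1.1)%g, [ffun i => g1.2 i *m g2.2 (g1.1^-1%g i)]).
Definition einv (g : elt) : elt := (g.1^-1%g, [ffun j => invmx (g.2 (g.1 j))]).

Definition vsub (x y : vec) : vec := fun i => x i - y i.

Definition cnorm (v : 'cV[C]_m) : C := sqrtC (\sum_(k < m) `|v k 0| ^+ 2).
Definition vnorm (x : vec) : C := sqrtC (\sum_(i < n) \sum_(k < m) `|x i k 0| ^+ 2).

Definition ctmx (A : 'M[C]_m) : 'M[C]_m := (map_mx Num.conj A)^T.

Definition inG (H : seq 'M[C]_m) (g : elt) : Prop := forall i, g.2 i \in H.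

Definition slot (l : nat) (h : 'M[C]_m) : {ffun 'I_n -> 'M[C]_m} :=
  [ffun i : 'I_n => if val i == l then h else 1%:M].

Definition cycp (j l : nat) : {perm 'I_n} := perm (@cycf_inj n j l).

(* Coset leaders CL(G_k / G_{k-1}), k = 1, ..., 2n-1:
   k = 1      : G_1 = {(h,1,...,1) : h in H}
   k = 2l     : {(1,..,1,h,1,..,1) : h in H}, h in slot l+1 (1-based) = l (0-based)
   k = 2l+1>1 : {(j j+1 ... l+1) : 1 <= j <= l+1} (1-based)
                = {(j ... l) : 0 <= j <= l} (0-based), l = k./2. *)
Definition inCL (H : seq 'M[C]_m) (k : nat) (d : elt) : Prop :=
  if odd k && (1 < k)%N
  then exists2 j : nat, (j <= k./2)%N & d = (cycp j k./2, [ffun => 1%:M])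
  else exists2 h, h \in H & d = (1%g, slot k./2 h).

Definition stab (H : seq 'M[C]_m) (x0 : vec) (g : elt) : Prop :=
  inG H g /\ act g x0 = x0.

Definition pickmin (f : elt -> C) (s : seq elt) : elt :=
  nth eone s (find (fun a => all (fun b => f a <= f b) s) s).

(* The subgroup decoding algorithm; ordr k is the fixed ordering of
   CL(G_k/G_{k-1}) used to break ties.  Returns d_{2n-1} ... d_1. *)
Definition decode (ordr : nat -> seq elt) (x0 r : vec) : elt :=
  (foldl (fun st k =>
     let d := pickmin (fun a => vnorm (vsub (act a st.1) x0)) (ordr k) in
     (act d st.1, emul d st.2))
   (r, eone) (iota 1 (2 * n - 1))).2.

Definition decodes_robustly (H : seq 'M[C]_m) (ordr : nat -> seq elt) (x0 : vec) : Prop :=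
  forall (g : elt) (r : vec), inG H g ->
    (forall h : elt, inG H h -> ~ (exists2 s, stab H x0 s & h = emul s g) ->
       vnorm (vsub r (act (einv g) x0)) < vnorm (vsub r (act (einv h) x0))) ->
    exists2 s, stab H x0 s & decode ordr x0 r = emul s g.

End Wreath.

From Pilot Require Import Defs.
From mathcomp Require Import all_boot all_algebra all_fingroup.
From mathcomp Require Import reals complex.
From mathcomp Require Import all_order ring zify.
From Stdlib Require Import FunctionalExtensionality.
Set Implicit Arguments. Unset Strict Implicit. Unset Printing Implicit Defensive.
Import Order.TTheory GRing.Theory Num.Theory.
Local Open Scope ring_scope.

(* The orbit of x0 = (u_i v0)_i under G consists of the vectors (u_(t i) b_i v0)_i
   with t a permutation and b_i in H, and the stabiliser of x0 is trivial.  Let r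
   lie in the open Voronoi cell of z0 = g^-1 x0.  Since G acts by isometries, the
   partial product d_k ... d_1 keeps mapping z0 to an orbit point that is nearest
   to r_k.  A step with leaders in slot l+1 is won exactly by the element that
   aligns that block with v0, because the nearest orbit point maximises
   Re <r_(l+1), b v0> over b in H.  A step with the cycle leaders inserts block
   l+1 into the sorted prefix, because exchanging two aligned blocks shows that
   the nearest orbit point orders them like Re <r_i, v0>.  After 2n-1 steps the
   orbit point is x0 itself, so the output maps g^-1 x0 to x0, i.e. equals g. *)

Section Hermitian.
Variables (R : realType) (m : nat).
Local Notation C := R[i].
Local Notation V := 'cV[C]_m.

Definition cdot (v w : V) : C := \sum_(k < m) (w k 0)^* * v k 0.
Definition sqnorm (v : V) : C := \sum_(k < m) `|v k 0| ^+ 2.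
Definition rdot (v w : V) : C := cdot v w + cdot w v.

Lemma sqnormE v : sqnorm v = cdot v v.
Proof. by apply: eq_bigr => k _; rewrite normCK mulrC. Qed.

Lemma sqnorm_ge0 v : 0 <= sqnorm v.
Proof. by apply: sumr_ge0 => k _; rewrite exprn_ge0. Qed.

Lemma cdot_unitary (h : 'M[C]_m) v w : h *m ctmx h = 1%:M ->
  cdot (h *m v) (h *m w) = cdot v w.
Proof.
have cdotE x y : cdot x y = ((map_mx Num.conj y)^T *m x) 0 0.
  by rewrite mxE; apply: eq_bigr => k _; rewrite !mxE.
move=> /mulmx1C hu; rewrite !cdotE map_mxM trmx_mul -mulmxA (mulmxA _ h).
by move: hu; rewrite /ctmx => ->; rewrite mul1mx.
Qed.

Lemma sqnorm_unitary (h : 'M[C]_m) v : h *m ctmx h = 1%:M -> sqnorm (h *m v) = sqnorm v.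
Proof. by move=> hu; rewrite !sqnormE cdot_unitary. Qed.

Lemma cdotZl (c : C) v w : cdot (c *: v) w = c * cdot v w.
Proof. by rewrite /cdot mulr_sumr; apply: eq_bigr => k _; rewrite !mxE; ring. Qed.

Lemma cdotZr (c : C) v w : c^* = c -> cdot v (c *: w) = c * cdot v w.
Proof.
move=> cr; rewrite /cdot mulr_sumr; apply: eq_bigr => k _.
by rewrite !mxE rmorphM /= cr; ring.
Qed.

Lemma sqnormZ (c : C) v : c^* = c -> sqnorm (c *: v) = c ^+ 2 * sqnorm v.
Proof. by move=> cr; rewrite !sqnormE cdotZl cdotZr // mulrA expr2. Qed.

Lemma sqnormBZ (a : C) v w : a^* = a -> sqnorm w = 1 ->
  sqnorm (v - a *: w) = sqnorm v + a ^+ 2 - a * rdot v w.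
Proof.
move=> ar w1; have -> : sqnorm (v - a *: w) = sqnorm v + sqnorm (a *: w) - rdot v (a *: w).
  rewrite /rdot !sqnormE /cdot -!big_split -sumrB /=; apply: eq_bigr => k _.
  by rewrite !mxE rmorphB /=; ring.
by rewrite sqnormZ // w1 mulr1 /rdot cdotZl cdotZr //; ring.
Qed.

End Hermitian.

Section Wreath.
Variables (R : realType) (m n : nat).
Local Notation C := R[i].
Local Notation vec := (vec R m n).
Local Notation elt := (elt R m n).
Local Notation act := (@Defs.act R m n).

Definition dist2 (y z : vec) : C := \sum_(i < n) sqnorm (y i - z i).

Lemma vnorm_dist2 (y z : vec) : vnorm (vsub y z) = sqrtC (dist2 y z).
Proof. by []. Qed.

Lemma dist2_ge0 y z : 0 <= dist2 y z.
Proof. by apply: sumr_ge0 => i _; apply: sqnorm_ge0. Qed.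

Lemma dist2_le y y' z z' :
  (vnorm (vsub y z) <= vnorm (vsub y' z')) = (dist2 y z <= dist2 y' z').
Proof. by rewrite !vnorm_dist2 ler_sqrtC // nnegrE dist2_ge0. Qed.

Lemma dist2_lt y y' z z' :
  (vnorm (vsub y z) < vnorm (vsub y' z')) = (dist2 y z < dist2 y' z').
Proof. by rewrite !vnorm_dist2 ltr_sqrtC // nnegrE dist2_ge0. Qed.

Lemma dist2_diff1 (y z y' z' : vec) io : (forall i, i != io -> y i - z i = y' i - z' i) ->
  dist2 y z - dist2 y' z' = sqnorm (y io - z io) - sqnorm (y' io - z' io).
Proof.
move=> e; rewrite /dist2 (bigD1 io) //= [X in _ - X](bigD1 io) //=.
by rewrite (eq_bigr (fun i => sqnorm (y' i - z' i))) => [|i /e ->]; ring.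
Qed.

Lemma dist2_diff2 (y z y' z' : vec) io jo : io != jo ->
  (forall i, i != io -> i != jo -> y i - z i = y' i - z' i) ->
  dist2 y z - dist2 y' z' = sqnorm (y io - z io) + sqnorm (y jo - z jo)
                          - (sqnorm (y' io - z' io) + sqnorm (y' jo - z' jo)).
Proof.
move=> ne e; rewrite /dist2 (bigD1 io) //= [X in _ - X](bigD1 io) //=.
rewrite (bigD1 jo) 1?eq_sym //= [X in _ - (_ + X)](bigD1 jo) 1?eq_sym //=.
by rewrite (eq_bigr (fun i => sqnorm (y' i - z' i))) => [|i /andP[/e ji /ji ->]]; ring.
Qed.

Lemma act_emul (d e : elt) x : act (emul d e) x = act d (act e x).
Proof.
apply: functional_extensionality_dep => i.
by rewrite /Defs.act /emul /= ffunE invMg permM mulmxA.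
Qed.

Lemma act_eone x : act (eone R m n) x = x.
Proof.
by apply: functional_extensionality_dep => i; rewrite /Defs.act /= ffunE invg1 perm1 mul1mx.
Qed.

Lemma emul1e (g : elt) : emul (eone R m n) g = g.
Proof.
case: g => g1 g2; rewrite /emul /= mulg1; congr pair.
by apply/ffunP => i; rewrite !ffunE mul1mx invg1 perm1.
Qed.

Lemma dist2_act (d : elt) y z : (forall i, d.2 i *m ctmx (d.2 i) = 1%:M) ->
  dist2 (act d y) (act d z) = dist2 y z.
Proof.
move=> du; rewrite /dist2 /act (reindex_inj (@perm_inj _ d.1)) /=.
by apply: eq_bigr => i _; rewrite permK -mulmxBr sqnorm_unitary.
Qed.

Definition slot_elt (l : nat) (h : 'M[C]_m) : elt := (1%g, slot n l h).
Definition cyc_elt (j l : nat) : elt := (cycp n j l, [ffun => 1%:M]).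

Lemma act_slot_elt l h y i : act (slot_elt l h) y i = (if val i == l then h else 1%:M) *m y i.
Proof. by rewrite /Defs.act /= ffunE invg1 perm1. Qed.

Lemma dist2_slot (lo : 'I_n) h h' y z :
  dist2 (act (slot_elt lo h) y) z - dist2 (act (slot_elt lo h') y) z
  = sqnorm (h *m y lo - z lo) - sqnorm (h' *m y lo - z lo).
Proof.
rewrite (dist2_diff1 (io := lo)); last move=> i ni.
  by rewrite !act_slot_elt eqxx.
have /negbTE nil : val i != lo by rewrite (inj_eq val_inj).
by rewrite !act_slot_elt nil.
Qed.

Lemma dist2_act_perm (c : {perm 'I_n}) y z :
  dist2 (act (c, [ffun => 1%:M]) y) z = dist2 y (fun i => z (c i)).
Proof.
rewrite /dist2 (reindex_inj (@perm_inj _ c)) /=.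
by apply: eq_bigr => i _; rewrite /Defs.act /= ffunE mul1mx permK.
Qed.

Lemma cycpE j l (i : 'I_n) : (j <= l)%N -> (l < n)%N -> cycp n j l i = cyc_nat j l i :> nat.
Proof.
move=> jl ln; rewrite /cycp permE /cycf jl ln /= val_insubd.
suff -> : (cyc_nat j l i < n)%N by [].
by have := ltn_ord i; rewrite /cyc_nat; repeat case: ifP => ?; lia.
Qed.

Lemma act_einvK (g : elt) x : (forall i, g.2 i \in unitmx) -> act g (act (einv g) x) = x.
Proof.
move=> gu; apply: functional_extensionality_dep => i.
by rewrite /Defs.act /einv /= ffunE invgK permKV mulmxA mulmxV // mul1mx.
Qed.

Lemma pickminP (f : elt -> C) s : s != [::] -> (forall a, a \in s -> 0 <= f a) ->
  pickmin f s \in s /\ forall b, b \in s -> f (pickmin f s) <= f b.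
Proof.
move=> sn0 fge.
have [a ains amin] : exists2 a, a \in s & forall b, b \in s -> f a <= f b.
  elim: s sn0 fge => [//|x s IH] _ fge.
  have fgex : 0 <= f x by apply: fge; rewrite mem_head.
  have [->|sn0] := eqVneq s [::].
    by exists x; rewrite ?mem_head // => b; rewrite inE => /eqP ->.
  have [a' a's a'min] := IH sn0 (fun a ais => fge a (mem_behead (s := x :: s) ais)).
  have fa' : 0 <= f a' by apply: fge; rewrite inE a's orbT.
  case/orP: (ger_leVge fgex fa') => le.
    exists x; first exact: mem_head.
    by move=> b; rewrite inE => /orP[/eqP ->//|/a'min]; apply: le_trans.
  by exists a'; rewrite ?inE ?a's ?orbT // => b; rewrite inE => /orP[/eqP ->|/a'min].
have hasP : has (fun a => all (fun b => f a <= f b) s) s.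
  by apply/hasP; exists a => //; apply/allP => b bs; exact: amin.
rewrite /pickmin; split; first by rewrite mem_nth // -has_find.
by move=> b bs; have /allP := nth_find (eone R m n) hasP; apply.
Qed.

End Wreath.

Section Insertion.
Variable n : nat.

(* Inserting block [lo] at position [j] of the sorted prefix [0 .. lo-1]. *)
Lemma cyc_nat_insert_sorted (f : 'I_n -> nat) (lo : 'I_n) j : injective f -> (j <= lo)%N ->
  (forall x y : 'I_n, (x < y)%N -> (y < lo)%N -> (f x < f y)%N) ->
  (forall x : 'I_n, x.+1 = j :> nat -> (f x <= f lo)%N) ->
  (forall x : 'I_n, x = j :> nat -> (x < lo)%N -> (f lo <= f x)%N) ->
  forall x y : 'I_n, (x <= lo)%N -> (y <= lo)%N ->
    (cyc_nat j lo x < cyc_nat j lo y)%N -> (f x < f y)%N.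
Proof.
move=> finj jl sorted below above x y xl yl cxy.
have mono (a c : 'I_n) : (a <= c)%N -> (c < lo)%N -> (f a <= f c)%N.
  by case: (ltngtP a c) => // [ac _ cl|/val_inj -> //]; apply/ltnW/sorted.
have xy : x != y by apply: contraTneq cxy => ->; rewrite ltnn.
rewrite ltn_neqAle (inj_eq finj) xy /=.
have ln := ltn_ord lo; move: cxy; rewrite /cyc_nat.
case: (ltngtP x lo) xl => // [xlt _|/val_inj -> _];
  case: (ltngtP y lo) yl => // [ylt _|/val_inj -> _]; last by rewrite ltnn.
- by move=> cxy; apply/ltnW/sorted => //; move: cxy; repeat case: ifP => ?; lia.
- move=> cxy; have jn : (j.-1 < n)%N by lia.
  have xj : (x < j)%N by move: cxy; repeat case: ifP => ?; lia.
  by apply: (leq_trans (mono x (Ordinal jn) _ _)) => /=; [lia | lia | apply: below => /=; lia].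
- move=> cxy; have jn : (j < n)%N by lia.
  have jy : (j <= y)%N by move: cxy; repeat case: ifP => ?; lia.
  by apply: (leq_trans (above (Ordinal jn) erefl _)) => /=; [lia | apply: mono].
Qed.

Lemma perm_sorted_id (t : {perm 'I_n}) :
  (forall i j : 'I_n, (i < j)%N -> (t i < t j)%N) -> t = 1%g.
Proof.
have incr_ge (f : {perm 'I_n}) : (forall i j : 'I_n, (i < j)%N -> (f i < f j)%N) ->
    forall i : 'I_n, (i <= f i)%N.
  move=> finc [k]; elim: k => // k IH klt.
  have := finc (Ordinal (ltnW klt)) (Ordinal klt) (ltnSn k).
  by have := IH (ltnW klt); rewrite /=; lia.
move=> tinc; have tVinc (i j : 'I_n) : (i < j)%N -> (t^-1%g i < t^-1%g j)%N.
  move=> ij; case: (ltngtP (t^-1%g i) (t^-1%g j)) => // [/tinc|/val_inj/perm_inj eij].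
    by rewrite !permKV => ji; have := ltn_trans ij ji; rewrite ltnn.
  by rewrite eij ltnn in ij.
apply/permP => i; apply: val_inj; rewrite perm1 /=.
by have := incr_ge _ tinc i; have := incr_ge _ tVinc (t i); rewrite permK; lia.
Qed.

End Insertion.

Section Orbit.
Variables (R : realType) (m n : nat).
Local Notation C := R[i].
Local Notation M := 'M[C]_m.
Local Notation vec := (vec R m n).
Local Notation elt := (elt R m n).
Local Notation act := (@Defs.act R m n).
Local Notation slot_elt := (@slot_elt R m n).
Local Notation cyc_elt := (@cyc_elt R m n).
Variables (H : seq M) (v0 : 'cV[C]_m) (u : 'I_n -> C).
Hypothesis H1 : 1%:M \in H.
Hypothesis HM : forall a b, a \in H -> b \in H -> a *m b \in H.
Hypothesis HV : forall a, a \in H -> invmx a \in H.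
Hypothesis HU : forall a, a \in H -> a *m ctmx a = 1%:M.
Hypothesis v0_unit : cnorm v0 = 1.
Hypothesis v0_closest : forall h, h \in H -> h != 1%:M ->
  cnorm (1%:M *m v0 - v0) < cnorm (h *m v0 - v0).
Hypothesis u_gt0 : forall i, 0 < u i.
Hypothesis u_incr : forall i j : 'I_n, (i < j)%N -> u i < u j.
Local Notation x0 := (fun i : 'I_n => u i *: v0).

Lemma sqnorm_v0 : sqnorm v0 = 1.
Proof. by rewrite -[sqnorm v0]sqrtCK; move: v0_unit; rewrite /cnorm => ->; rewrite expr1n. Qed.

Lemma unitmx_H a : a \in H -> a \in unitmx.
Proof. by move=> /HU /mulmx1_unit []. Qed.

Lemma H_fix_v0 a : a \in H -> a *m v0 = v0 -> a = 1%:M.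
Proof.
move=> aH av; apply/eqP; apply/negPn/negP => /(v0_closest aH).
by rewrite av mul1mx ltxx.
Qed.

Lemma H_mul_v0_inj a b : a \in H -> b \in H -> a *m v0 = b *m v0 -> a = b.
Proof.
move=> aH bH e; have bHu := unitmx_H bH.
have : invmx b *m a = 1%:M.
  by apply: H_fix_v0; [apply: HM; first apply: HV | rewrite -mulmxA e mulmxA mulVmx ?mul1mx].
by move=> e1; rewrite -(mulKVmx bHu a) e1 mulmx1.
Qed.

Lemma sqnorm_H_v0 a : a \in H -> sqnorm (a *m v0) = 1.
Proof. by move=> aH; rewrite sqnorm_unitary ?sqnorm_v0 // HU. Qed.

Lemma u_real i : (u i)^* = u i.
Proof. exact: geC0_conj (ltW (u_gt0 i)). Qed.

Lemma u_inj : injective u.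
Proof.
move=> i j e; apply/eqP; case: (ltngtP i j) => [ij|ji|/val_inj ->//].
  by have := u_incr ij; rewrite e ltxx.
by have := u_incr ji; rewrite e ltxx.
Qed.

Lemma sqnorm_sub_u y i : sqnorm (y - u i *: v0) = sqnorm y + u i ^+ 2 - u i * rdot y v0.
Proof. by rewrite sqnormBZ ?u_real ?sqnorm_v0. Qed.

Lemma sqnorm_mulH_sub h y (c : C) : h \in H ->
  sqnorm (h *m y - c *: v0) = sqnorm (y - c *: (invmx h *m v0)).
Proof.
move=> hH; rewrite -(sqnorm_unitary (y - c *: (invmx h *m v0)) (HU hH)).
by rewrite mulmxBr -scalemxAr mulmxA mulmxV ?unitmx_H // mul1mx.
Qed.

Definition orbit_pt (t : {perm 'I_n}) (b : 'I_n -> M) : vec :=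
  fun i => u (t i) *: (b i *m v0).

Definition blocksH (b : 'I_n -> M) := forall i, b i \in H.

Lemma orbit_pt_inj t b t' b' : blocksH b -> blocksH b' -> orbit_pt t b = orbit_pt t' b' ->
  t = t' /\ forall i, b i = b' i.
Proof.
move=> bH b'H e.
have key i : t i = t' i /\ b i = b' i.
  have ei : orbit_pt t b i = orbit_pt t' b' i by rewrite e.
  have /eqP : sqnorm (orbit_pt t b i) = sqnorm (orbit_pt t' b' i) by rewrite ei.
  rewrite !sqnormZ ?u_real // !sqnorm_H_v0 // !mulr1 eqrXn2 ?ltW ?u_gt0 // => /eqP /u_inj tt.
  split => //; apply: H_mul_v0_inj => //; apply: (scalerI (a := u (t i))).
    by rewrite gt_eqF ?u_gt0.
  by move: ei; rewrite /orbit_pt tt.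
by split => [|i]; [apply/permP => i|]; case: (key i).
Qed.

Lemma orbit_pt_ext t b b' : (forall i, b i = b' i) -> orbit_pt t b = orbit_pt t b'.
Proof. by move=> e; apply: functional_extensionality_dep => i; rewrite /orbit_pt e. Qed.

Lemma act_orbit_pt (d : elt) t b :
  act d (orbit_pt t b) = orbit_pt (d.1^-1 * t)%g (fun i => d.2 i *m b (d.1^-1%g i)).
Proof.
apply: functional_extensionality_dep => i.
by rewrite /Defs.act /orbit_pt permM -scalemxAr mulmxA.
Qed.

Lemma x0E : x0 = orbit_pt 1%g (fun _ => 1%:M).
Proof. by apply: functional_extensionality_dep => i; rewrite /orbit_pt perm1 mul1mx. Qed.

Lemma act_orbit_pt_inj (d d' : elt) t b : inG H d -> inG H d' -> blocksH b ->
  act d (orbit_pt t b) = act d' (orbit_pt t b) -> d = d'.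
Proof.
case: d d' => [p f] [p' f'] dG d'G bH; rewrite !act_orbit_pt /=.
have bdH (g : elt) : inG H g -> blocksH (fun i => g.2 i *m b (g.1^-1%g i)).
  by move=> gG i; apply: HM.
case/(orbit_pt_inj (bdH (p, f) dG) (bdH (p', f') d'G)) => /mulIg/invg_inj <- ef.
congr pair; apply/ffunP => i.
have bu := unitmx_H (bH (p^-1%g i)).
by rewrite -(mulmxK bu (f i)) ef mulmxK.
Qed.

Definition voronoi (y z : vec) :=
  forall t b, blocksH b -> orbit_pt t b <> z -> dist2 y z < dist2 y (orbit_pt t b).

Lemma voronoi_act (d : elt) y t b : inG H d -> blocksH b -> voronoi y (orbit_pt t b) ->
  voronoi (act d y) (act d (orbit_pt t b)).
Proof.
move=> dG bH vor t' b' b'H ne.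
pose w := orbit_pt (d.1 * t')%g (fun i => invmx (d.2 (d.1 i)) *m b' (d.1 i)).
have aw : act d w = orbit_pt t' b'.
  rewrite /w act_orbit_pt mulKg; apply: orbit_pt_ext => i.
  by rewrite permKV mulmxA mulmxV ?unitmx_H ?mul1mx.
have dU i : d.2 i *m ctmx (d.2 i) = 1%:M by apply: HU.
rewrite -aw !(dist2_act _ _ dU); apply: vor => [i|e]; first by apply: HM; first apply: HV.
by apply: ne; rewrite -aw /w e.
Qed.

Lemma stab_trivial (s : elt) : stab H x0 s -> s = eone R m n.
Proof.
case=> sG; rewrite x0E -{2}[orbit_pt _ _]act_eone => /act_orbit_pt_inj; apply => // i.
by rewrite ffunE.
Qed.

(* Exchanging the targets of two aligned blocks [i] and [j] shows that the
   Voronoi cell orders them consistently with [t]. *)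
Lemma voronoi_rdot_sort y t b i j : blocksH b -> voronoi y (orbit_pt t b) ->
  b i = 1%:M -> b j = 1%:M -> rdot (y i) v0 <= rdot (y j) v0 -> (t i <= t j)%N.
Proof.
move=> bH vor bi bj le; rewrite leqNgt; apply/negP => tji.
have ne : i != j by apply: contraTneq tji => ->; rewrite ltnn.
pose t' := (tperm i j * t)%g.
have ne' : orbit_pt t' b <> orbit_pt t b.
  case/(orbit_pt_inj bH bH) => /(congr1 (fun p : {perm _} => p i)).
  by rewrite permM tpermL => /perm_inj eji _; rewrite eji eqxx in ne.
have := vor _ _ bH ne'; rewrite -subr_gt0 (dist2_diff2 ne); last first.
  by move=> k ki kj; rewrite /orbit_pt /t' permM tpermD // eq_sym.
rewrite /orbit_pt /t' !permM tpermL tpermR bi bj mul1mx !sqnorm_sub_u.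
set A := (X in 0 < X); have -> : A = (u (t i) - u (t j)) * (rdot (y i) v0 - rdot (y j) v0).
  by rewrite /A; ring.
by rewrite pmulr_rgt0 ?subr_gt0 ?u_incr // => /lt_geF; rewrite le.
Qed.

Lemma voronoi_block_max y t b (l : 'I_n) c : blocksH b -> voronoi y (orbit_pt t b) ->
  c \in H -> c != b l -> rdot (y l) (c *m v0) < rdot (y l) (b l *m v0).
Proof.
move=> bH vor cH ne.
pose b' i := if i == l then c else b i.
have b'H : blocksH b' by move=> i; rewrite /b'; case: ifP.
have ne' : orbit_pt t b' <> orbit_pt t b.
  by case/(orbit_pt_inj b'H bH) => _ /(_ l); rewrite /b' eqxx => e; rewrite e eqxx in ne.
have := vor _ _ b'H ne'; rewrite -subr_gt0 (dist2_diff1 (io := l)); last first.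
  by move=> i il; rewrite /orbit_pt /b' (negbTE il).
rewrite /orbit_pt /b' eqxx !sqnormBZ ?u_real ?sqnorm_H_v0 //.
set A := (X in 0 < X).
have -> : A = u (t l) * (rdot (y l) (b l *m v0) - rdot (y l) (c *m v0)) by rewrite /A; ring.
by rewrite pmulr_rgt0 ?u_gt0 // subr_gt0.
Qed.

Lemma voronoi_align y t b (l : 'I_n) h : blocksH b -> voronoi y (orbit_pt t b) -> h \in H ->
  sqnorm (h *m y l - u l *: v0) <= sqnorm (invmx (b l) *m y l - u l *: v0) ->
  h *m b l = 1%:M.
Proof.
move=> bH vor hH.
rewrite !sqnorm_mulH_sub ?HV // invmxK !sqnormBZ ?u_real ?sqnorm_H_v0 ?HV //.
rewrite lerD2l lerN2 ler_pM2l ?u_gt0 // => le.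
have <- : invmx h = b l.
  apply/eqP; apply/negPn/negP => /(voronoi_block_max bH vor (HV hH)).
  by move/lt_geF; rewrite le.
by rewrite mulmxV ?unitmx_H.
Qed.

Lemma dist2_cyc_succ y (jo j1o lo : 'I_n) : j1o = jo.+1 :> nat -> (jo < lo)%N ->
  dist2 (act (cyc_elt jo lo) y) x0 - dist2 (act (cyc_elt j1o lo) y) x0 = (u j1o - u jo) * (rdot (y lo) v0 - rdot (y jo) v0).
Proof.
move=> ej jl; have ln := ltn_ord lo.
have ne : jo != lo by rewrite neq_ltn jl.
rewrite !dist2_act_perm (dist2_diff2 ne); last first.
  move=> i ni nl; have ni' : i <> jo :> nat by move=> /val_inj /eqP; rewrite (negbTE ni).
  have nl' : i <> lo :> nat by move=> /val_inj /eqP; rewrite (negbTE nl).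
  congr (_ - u _ *: _); apply: val_inj => /=.
  by rewrite !cycpE /cyc_nat; try lia; repeat case: ifP => ?; lia.
have cyc_at j (i k : 'I_n) : (j <= lo)%N -> cyc_nat j lo i = k -> cycp n j lo i = k.
  by move=> jl' e; apply: val_inj => /=; rewrite cycpE ?ltn_ord.
have cyc_jo : cycp n jo lo jo = j1o by apply: cyc_at; rewrite /cyc_nat; repeat case: ifP => ?; lia.
have cyc_lo : cycp n jo lo lo = jo by apply: cyc_at; rewrite /cyc_nat; repeat case: ifP => ?; lia.
have cyc1_jo : cycp n j1o lo jo = jo by apply: cyc_at; rewrite /cyc_nat; repeat case: ifP => ?; lia.
have cyc1_lo : cycp n j1o lo lo = j1o by apply: cyc_at; rewrite /cyc_nat; repeat case: ifP => ?; lia.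
by rewrite cyc_jo cyc_lo cyc1_jo cyc1_lo !sqnorm_sub_u; ring.
Qed.

Lemma voronoi_of_robust (g : elt) r : inG H g ->
  (forall h : elt, inG H h -> ~ (exists2 s, stab H x0 s & h = emul s g) ->
     vnorm (vsub r (act (einv g) x0)) < vnorm (vsub r (act (einv h) x0))) ->
  voronoi r (act (einv g) x0).
Proof.
move=> gG closest t b bH ne.
pose h : elt := (t, [ffun j => invmx (b (t^-1%g j))]).
have hx : act (einv h) x0 = orbit_pt t b.
  rewrite x0E act_orbit_pt /= invgK mulg1; apply: orbit_pt_ext => i.
  by rewrite !ffunE permK invmxK mulmx1.
rewrite -dist2_lt -hx; apply: closest => [j|[s /stab_trivial -> hg]].
  by rewrite ffunE; apply: HV.
by apply: ne; rewrite -hx hg emul1e.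
Qed.

Definition aligned (a : nat) (b : 'I_n -> M) := forall i : 'I_n, (i < a)%N -> b i = 1%:M.

Definition sorted_below (s : nat) (t : {perm 'I_n}) :=
  forall i j : 'I_n, (i < j)%N -> (j < s)%N -> (t i < t j)%N.

Definition apply_leader (d : elt) (st : vec * elt) : vec * elt := (act d st.1, emul d st.2).

(* Invariant after k steps, with [st = (r_k, d_k ... d_1)] and [z0] the codeword
   nearest to [r]: the partial product maps [z0] to an orbit point still nearest
   to [r_k], whose first [a] blocks are aligned with [v0] and whose first [s]
   targets are increasing. *)
Definition decode_inv (z0 : vec) (a s : nat) (st : vec * elt) :=
  inG H st.2 /\ exists t b, [/\ blocksH b, act st.2 z0 = orbit_pt t b,
    voronoi st.1 (orbit_pt t b), aligned a b & sorted_below s t].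

Lemma decode_inv_apply z0 a s st (d : elt) t b :
  inG H st.2 -> blocksH b -> act st.2 z0 = orbit_pt t b -> voronoi st.1 (orbit_pt t b) ->
  inG H d -> aligned a (fun i => d.2 i *m b (d.1^-1%g i)) -> sorted_below s (d.1^-1 * t)%g ->
  decode_inv z0 a s (apply_leader d st).
Proof.
move=> DG bH ez vor dG al so; split=> [i|]; first by rewrite /emul /= ffunE; apply: HM.
exists (d.1^-1 * t)%g, (fun i => d.2 i *m b (d.1^-1%g i)); split => //.
- by move=> i; apply: HM.
- by rewrite /= act_emul ez act_orbit_pt.
- by rewrite -act_orbit_pt; apply: voronoi_act.
Qed.

Lemma decode_inv_slot z0 (lo : 'I_n) s st h : h \in H -> decode_inv z0 lo s st ->
  (forall c, c \in H -> dist2 (act (slot_elt lo h) st.1) x0 <= dist2 (act (slot_elt lo c) st.1) x0) ->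
  decode_inv z0 lo.+1 s (apply_leader (slot_elt lo h) st).
Proof.
move=> hH [DG [t [b [bH ez vor al so]]]] hmin.
have hb : h *m b lo = 1%:M.
  apply: (voronoi_align bH vor hH).
  by have := hmin _ (HV (bH lo)); rewrite -subr_le0 dist2_slot subr_le0.
apply: (decode_inv_apply DG bH ez vor) => [i|i|i j]; rewrite /= ?ffunE ?invg1 ?perm1.
- by case: ifP.
- rewrite ltnS leq_eqVlt => /orP[/eqP/val_inj ->|il]; first by rewrite eqxx.
  by rewrite ifN ?al ?mul1mx // neq_ltn il.
- by rewrite mul1g; apply: so.
Qed.

Lemma decode_inv_cycle z0 (lo : 'I_n) j st : (j <= lo)%N -> decode_inv z0 lo.+1 lo st ->
  (forall j', (j' <= lo)%N ->
     dist2 (act (cyc_elt j lo) st.1) x0 <= dist2 (act (cyc_elt j' lo) st.1) x0) ->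
  decode_inv z0 lo.+1 lo.+1 (apply_leader (cyc_elt j lo) st).
Proof.
move=> jl [DG [t [b [bH ez vor al so]]]] cmin; set y := st.1 in vor cmin.
set c := cycp n j lo; have ln := ltn_ord lo.
have cE (x : 'I_n) : c x = cyc_nat j lo x :> nat by rewrite cycpE.
have cV_le (x : 'I_n) : (x <= lo)%N -> (c^-1%g x <= lo)%N.
  move=> xl; move: (cE (c^-1%g x)); rewrite permKV /cyc_nat.
  by repeat case: ifP => ?; lia.
have b1 (i : 'I_n) : (i <= lo)%N -> b i = 1%:M by move=> il; apply: al.
have sort_le (i i' : 'I_n) : (i <= lo)%N -> (i' <= lo)%N ->
    rdot (y i) v0 <= rdot (y i') v0 -> (t i <= t i')%N.
  by move=> il i'l; apply: (voronoi_rdot_sort bH vor); apply: b1.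
apply: (decode_inv_apply DG bH ez vor) => [i|i il|i i' ii' i'l] /=.
- by rewrite ffunE.
- by rewrite ffunE mul1mx b1 ?cV_le.
rewrite !permM; apply: (@cyc_nat_insert_sorted _ (fun x => t x) lo j) => //.
- by move=> x x' /val_inj/perm_inj.
- move=> x xj; subst j; have jn : (x.+1 < n)%N by lia.
  have := cmin x (ltnW jl).
  rewrite -subr_ge0 (dist2_cyc_succ _ (j1o := Ordinal jn)) //.
  rewrite pmulr_rge0 ?subr_gt0 ?u_incr //= subr_ge0.
  by apply: sort_le; lia.
- move=> x xj xl; subst j; have jn : (x.+1 < n)%N by lia.
  have := cmin x.+1 xl.
  rewrite -subr_le0 (dist2_cyc_succ _ (j1o := Ordinal jn)) //.
  rewrite pmulr_rle0 ?subr_gt0 ?u_incr //= subr_le0.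
  by apply: sort_le; lia.
- by apply: cV_le; lia.
- by apply: cV_le.
by rewrite -!cE !permKV.
Qed.

Variable ordr : nat -> seq elt.
Hypothesis ordrP : forall k, (1 <= k <= 2 * n - 1)%N ->
  uniq (ordr k) /\ (forall d, d \in ordr k <-> inCL H k d).

Definition decode_step (st : vec * elt) (k : nat) : vec * elt :=
  apply_leader (pickmin (fun a => vnorm (vsub (act a st.1) x0)) (ordr k)) st.

Lemma decode_step_leader st k : (1 <= k <= 2 * n - 1)%N ->
  exists2 d, inCL H k d & decode_step st k = apply_leader d st /\
    forall a, inCL H k a -> dist2 (act d st.1) x0 <= dist2 (act a st.1) x0.
Proof.
move=> kn; have [_ memd] := ordrP kn.
have [a0 /memd a0k] : exists a : elt, inCL H k a.
  case: (boolP (odd k && (1 < k)%N)) => kc.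
    by exists (cyc_elt 0 k./2); rewrite /inCL kc; exists 0%N.
  by exists (slot_elt k./2 1%:M); rewrite /inCL (negbTE kc); exists 1%:M.
have ne : ordr k != [::] by apply: contraTneq a0k => ->.
pose f a := vnorm (vsub (act a st.1) x0).
have [|dmem dmin] := pickminP (f := f) ne.
  by move=> a _; rewrite /f vnorm_dist2 sqrtC_ge0 dist2_ge0.
exists (pickmin f (ordr k)); first exact/(memd _).1.
by split => // a /memd /dmin; rewrite dist2_le.
Qed.

Lemma decode_inv_step_slot z0 k s st : (1 <= k <= 2 * n - 1)%N -> ~~ (odd k && (1 < k)%N) ->
  decode_inv z0 k./2 s st -> decode_inv z0 k./2.+1 s (decode_step st k).
Proof.
move=> kn kev I; have [d] := decode_step_leader st kn; rewrite /inCL (negbTE kev).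
case=> h hH -> [-> dmin]; have ln : (k./2 < n)%N by lia.
apply: (decode_inv_slot (lo := Ordinal ln) hH I) => c cH.
by apply: dmin; exists c.
Qed.

Lemma decode_inv_step_cycle z0 k st : (k <= 2 * n - 1)%N -> odd k -> (1 < k)%N ->
  decode_inv z0 k./2.+1 k./2 st -> decode_inv z0 k./2.+1 k./2.+1 (decode_step st k).
Proof.
move=> kn ko k1 I; have kodd : odd k && (1 < k)%N by rewrite ko k1.
have [|d] := decode_step_leader st (k := k); first lia.
rewrite /inCL kodd => -[j jl ->] [-> dmin]; have ln : (k./2 < n)%N by lia.
apply: (decode_inv_cycle (lo := Ordinal ln) jl I) => j' j'l.
by apply: dmin; exists j'.
Qed.

Lemma decode_inv_iter z0 st l : (l < n)%N -> decode_inv z0 0 1 st ->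
  decode_inv z0 l.+1 l.+1 (foldl decode_step st (iota 1 (2 * l).+1)).
Proof.
move=> ln I0; elim: l ln => [|l IH] ln.
  by rewrite muln0; apply: (decode_inv_step_slot (k := 1)) => //; lia.
have -> : iota 1 (2 * l.+1).+1 = iota 1 (2 * l).+1 ++ [:: (2 * l).+2; (2 * l).+3].
  by rewrite (_ : (2 * l.+1).+1 = (2 * l).+1 + 2)%N ?iotaD ?add1n //; lia.
rewrite foldl_cat; set st' := foldl _ st _; rewrite [foldl _ _ _]/=.
have := @decode_inv_step_cycle z0 (2 * l).+3; rewrite (_ : _./2 = l.+1); last lia.
apply; try lia.
have := @decode_inv_step_slot z0 (2 * l).+2; rewrite (_ : _./2 = l.+1); last lia.
by apply; try lia; apply: IH; lia.
Qed.

Lemma subgroup_decoding_robust : (0 < n)%N -> decodes_robustly H ordr x0.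
Proof.
move=> n_gt0 g r gG closest; pose bg i := invmx (g.2 (g.1 i)).
have bgH : blocksH bg by move=> i; apply: HV.
have z0E : act (einv g) x0 = orbit_pt g.1 bg.
  rewrite x0E act_orbit_pt invgK mulg1; apply: orbit_pt_ext => i.
  by rewrite ffunE mulmx1.
have I0 : decode_inv (act (einv g) x0) 0 1 (r, eone R m n).
  split=> [i|]; first by rewrite ffunE.
  exists g.1, bg; split => //; last by move=> i j; lia.
    by rewrite act_eone.
  by rewrite -z0E; apply: voronoi_of_robust.
have -> : decode ordr x0 r = (foldl decode_step (r, eone R m n) (iota 1 (2 * n.-1).+1)).2.
  by rewrite (_ : (2 * n.-1).+1 = 2 * n - 1)%N //; lia.
have [DG [t [b [bH ez _ al so]]]] := decode_inv_iter (l := n.-1) (ltac:(lia)) I0.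
have t1 : t = 1%g by apply: perm_sorted_id => i j ij; apply: so; have := ltn_ord j; lia.
have b1 i : b i = 1%:M by apply: al; have := ltn_ord i; lia.
exists (eone R m n); first by split => [i|]; rewrite ?ffunE ?act_eone.
rewrite emul1e; apply: (act_orbit_pt_inj (t := g.1) DG gG bgH).
by rewrite -z0E ez t1 (orbit_pt_ext _ b1) -x0E act_einvK // => i; apply: unitmx_H.
Qed.

End Orbit.

Theorem mainTheorem14 (R : realType) (m n : nat)
  (H : seq 'M[R[i]]_m) (v0 : 'cV[R[i]]_m) (u : 'I_n -> R[i])
  (ordr : nat -> seq (elt R m n)) :
  (0 < m)%N -> (0 < n)%N ->
  (* H is a finite unitary subgroup of GL_m(C) *)
  1%:M \in H ->
  (forall a b, a \in H -> b \in H -> a *m b \in H) ->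
  (forall a, a \in H -> invmx a \in H) ->
  (forall a, a \in H -> a *m ctmx a = 1%:M) ->
  (* v0 is a unit vector and the identity is the unique h in H minimizing |h v0 - v0| *)
  cnorm v0 = 1 ->
  (forall h, h \in H -> h != 1%:M -> cnorm (1%:M *m v0 - v0) < cnorm (h *m v0 - v0)) ->
  (* 0 < u_1 < ... < u_n reals, |x0| = 1 *)
  (forall i, 0 < u i) ->
  (forall i j : 'I_n, (i < j)%N -> u i < u j) ->
  vnorm (fun i => u i *: v0) = 1 ->
  (* ordr k is a fixed ordering of CL(G_k/G_{k-1}) *)
  (forall k, (1 <= k <= 2 * n - 1)%N ->
     uniq (ordr k) /\ (forall d, d \in ordr k <-> inCL H k d)) ->
  decodes_robustly H ordr (fun i => u i *: v0).
Proof.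
move=> _ n_gt0 H1 HM HV HU v0_unit v0_closest u_gt0 u_incr _ ordrP.
exact: (subgroup_decoding_robust H1 HM HV HU v0_unit v0_closest u_gt0 u_incr ordrP n_gt0).
Qed.
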